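(* Let $n \geq 5$ and write $n = 4k + r$ with integers $k \geq 1$ and $0 \leq r < 4$. Consider the following game for $n$ collaborating classical players $P_1,\dots,P_n$, who may share arbitrary classical randomness (correlated information) fixed before the game starts, but no quantum information. A pair of distinct players is chosen uniformly at random among all $\binom{n}{2}$ pairs; neither chosen player learns which other player was chosen (the remaining $n-2$ players may know which pair was chosen). The remaining $n-2$ players may communicate among themselves and then announce a single ''hint'' bit $b$, which both chosen players hear. Each chosen player then, without any communication with the other chosen player, outputs a bit; the game is won if and only if the two output bits are different. Then for every classical strategy, the probability of losing the game is at least \[ p(n) = (4-r)\cdot \frac{k}{n}\cdot \frac{k-1}{n-1} + r\cdot \frac{k+1}{n}\cdot \frac{k}{n-1}. \] *)

From HB Require Import structures.
From mathcomp Require Import all_boot all_order all_algebra.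
Set Implicit Arguments. Unset Strict Implicit. Unset Printing Implicit Defensive.
Import Order.TTheory GRing.Theory Num.Theory.
Local Open Scope ring_scope.

(* A classical strategy with shared randomness:
   - Omega : finite sample space of the shared random string, with
     probability weights mu;
   - hint w i j : the hint bit announced by the non-chosen players when the
     chosen pair is {i, j} (only used with i < j) and the shared random
     string is w;
   - out w i b : the output bit of chosen player i upon hearing hint b,
     given shared random string w (player i does not know its partner). *)

Definition is_distr (Omega : finType) (R : numDomainType) (mu : Omega -> R) :=
  (forall w, 0 <= mu w) /\ \sum_(w : Omega) mu w = 1.

Definition lose_ind (R : numDomainType) (n : nat) (Omega : finType)
  (hint : Omega -> 'I_n -> 'I_n -> bool) (out : Omega -> 'I_n -> bool -> bool)
  (w : Omega) (i j : 'I_n) : R :=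
  if out w i (hint w i j) == out w j (hint w i j) then 1 else 0.

Definition lose_prob (R : numFieldType) (n : nat) (Omega : finType)
  (mu : Omega -> R)
  (hint : Omega -> 'I_n -> 'I_n -> bool) (out : Omega -> 'I_n -> bool -> bool)
  : R :=
  ('C(n, 2))%:R^-1 *
  \sum_(i : 'I_n) \sum_(j : 'I_n | (i < j)%N) \sum_(w : Omega)
     mu w * lose_ind R hint out w i j.

Definition p_bound (R : numFieldType) (n : nat) : R :=
  let k := (n %/ 4)%N in let r := (n %% 4)%N in
  (4 - r%:R) * (k%:R / n%:R) * ((k%:R - 1) / (n%:R - 1))
  + r%:R * ((k%:R + 1) / n%:R) * (k%:R / (n%:R - 1)).

(* Fix the shared random string.  A chosen player's behaviour is then one of
   the four maps from the hint bit to its output bit, and two chosen players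
   with the same map lose whatever hint is announced.  Hence, for every random
   string, the number of losing pairs is at least the number of pairs inside
   the four classes of players, which by convexity of [a |-> a^2] (in the form
   [(2k+1) a <= a^2 + k(k+1)]) is at least [4 C(k,2) + r k], the value for
   classes of sizes as equal as possible.  Dividing by [C(n,2)] gives [p(n)]. *)

From HB Require Import structures.
From mathcomp Require Import all_boot all_order all_algebra.
From mathcomp Require Import zify ring.

Set Implicit Arguments.
Unset Strict Implicit.
Unset Printing Implicit Defensive.
Import Order.TTheory GRing.Theory Num.Theory.

Lemma sum_pairs_sym n (f : 'I_n -> 'I_n -> nat) :
  (forall i j, f i j = f j i) ->
  \sum_(i < n) \sum_(j < n) f i j
    = 2 * \sum_(i < n) \sum_(j < n | i < j) f i j + \sum_(i < n) f i i.
Proof.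
move=> f_sym.
have split_row (i : 'I_n) : \sum_j f i j
    = \sum_(j < n | i < j) f i j + \sum_(j < n | j < i) f i j + f i i.
  rewrite (bigD1 i) //= addnC (bigID (fun j : 'I_n => i < j)) /=.
  congr (_ + _ + _); apply: eq_bigl => j.
    by apply/andb_idl => lt_ij; rewrite -val_eqE gtn_eqF.
  by rewrite -leqNgt -val_eqE /=; case: ltngtP.
rewrite (eq_bigr _ (fun i _ => split_row i)) !big_split /= mul2n -addnn.
congr (_ + _ + _); rewrite (exchange_big_dep xpredT) //=.
by apply: eq_bigr => i _; apply: eq_bigr => j _.
Qed.

Lemma leq_secant_sqrn a k : (2 * k + 1) * a <= a ^ 2 + k * (k + 1).
Proof. by have [|] := leqP a k; nia. Qed.

Section MonochromaticPairs.

Variables (S : finType) (n : nat) (c : 'I_n -> S).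

Let fibre t := #|[set i | c i == t]|.

Lemma sum_card_fibres : \sum_t fibre t = n.
Proof.
rewrite -[n in RHS]card_ord -sum1_card (partition_big c xpredT) //=.
by apply: eq_bigr => t _; rewrite sum1dep_card.
Qed.

Lemma sum_sqr_card_fibres :
  \sum_t fibre t ^ 2 = \sum_(i < n) \sum_(j < n) (c i == c j : nat).
Proof.
rewrite (partition_big c xpredT) //=; apply: eq_bigr => t _.
rewrite (eq_bigr (fun _ => fibre t)) => [|i /eqP <-].
  by rewrite sum_nat_const -cardsE.
rewrite /fibre -sum1dep_card [RHS]big_mkcond /=.
by apply: eq_bigr => j _; rewrite eq_sym; case: (_ == _).
Qed.

Lemma monochromatic_pairs_ge :
  #|S| * 'C(n %/ #|S|, 2) + n %% #|S| * (n %/ #|S|)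
    <= \sum_(i < n) \sum_(j < n | i < j) (c i == c j : nat).
Proof.
set m := #|S|; set k := n %/ m; set r := n %% m.
set P := \sum_(i < n) \sum_(j < n | i < j) _.
have n_eq : n = m * k + r by rewrite /k /r mulnC -divn_eq.
have bin2k : 'C(k, 2) * 2 + k = k * k.
  by case: (k) => // k'; rewrite bin_ffact ffactnS ffactn1 -mulnSr.
have pairs_eq : \sum_t fibre t ^ 2 = 2 * P + n.
  rewrite sum_sqr_card_fibres sum_pairs_sym => [|i j]; last by rewrite eq_sym.
  congr (_ + _); rewrite (eq_bigr (fun _ => 1)) => [|i _]; last by rewrite eqxx.
  by rewrite sum1_card card_ord.
have secant : (2 * k + 1) * n <= \sum_t fibre t ^ 2 + m * (k * (k + 1)).
  rewrite -{1}sum_card_fibres big_distrr -sum_nat_const -big_split /=.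
  by apply: leq_sum => t _; apply: leq_secant_sqrn.
by rewrite pairs_eq n_eq in secant; nia.
Qed.
End MonochromaticPairs.

Local Open Scope ring_scope.

Lemma natr_bin2 (R : numFieldType) m : 'C(m, 2)%:R = m%:R * (m%:R - 1) / 2 :> R.
Proof.
case: m => [|m]; first by rewrite bin0n mul0r mul0r.
apply: (canRL (mulfK _)); first by rewrite pnatr_eq0.
by rewrite -natrM bin_ffact ffactnS ffactn1 natrM -addn1 natrD addrK addn1.
Qed.

Lemma p_bound_binomial (R : numFieldType) n : (1 < n)%N ->
  p_bound R n = (4 * 'C(n %/ 4, 2) + n %% 4 * (n %/ 4))%:R / 'C(n, 2)%:R.
Proof.
move=> n_gt1; rewrite /p_bound natrD !natrM !natr_bin2.
have n_neq0 : n%:R != 0 :> R by rewrite pnatr_eq0 -lt0n ltnW.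
have n1_neq0 : n%:R - 1 != 0 :> R.
  by rewrite subr_eq0 pnatr_eq1 gtn_eqF.
by field; rewrite n_neq0 n1_neq0.
Qed.

Lemma distr_mean_ge (Omega : finType) (R : numDomainType) (mu X : Omega -> R)
    (a : R) :
  is_distr mu -> (forall w, a <= X w) -> a <= \sum_w mu w * X w.
Proof.
move=> [mu_ge0 mu_sum1] X_ge; rewrite -[a]mul1r -mu_sum1 mulr_suml.
by apply: ler_sum => w _; apply: ler_wpM2l.
Qed.

Section ClassicalStrategy.

Variables (R : numFieldType) (n : nat) (Omega : finType).
Variable hint : Omega -> 'I_n -> 'I_n -> bool.
Variable out : Omega -> 'I_n -> bool -> bool.

Definition response (w : Omega) (i : 'I_n) : bool * bool :=
  (out w i false, out w i true).

Definition pairs_lost (w : Omega) : R :=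
  \sum_(i < n) \sum_(j < n | (i < j)%N) lose_ind R hint out w i j.

Lemma lose_ind_same_response w i j :
  response w i = response w j -> lose_ind R hint out w i j = 1.
Proof.
case=> out_false out_true; rewrite /lose_ind.
by case: (hint w i j); rewrite ?out_false ?out_true eqxx.
Qed.

Lemma monochromatic_le_pairs_lost w :
  (\sum_(i < n) \sum_(j < n | (i < j)%N) (response w i == response w j : nat))%:R
    <= pairs_lost w.
Proof.
rewrite natr_sum; apply: ler_sum => i _.
rewrite natr_sum; apply: ler_sum => j _.
case: eqP => [/lose_ind_same_response -> //|_].
by rewrite /lose_ind; case: ifP.
Qed.

Lemma lose_prob_pairs_lost (mu : Omega -> R) :
  lose_prob mu hint out = 'C(n, 2)%:R^-1 * \sum_w mu w * pairs_lost w.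
Proof.
rewrite /lose_prob /pairs_lost; congr (_ * _).
under eq_bigr do rewrite exchange_big.
rewrite exchange_big; apply: eq_bigr => w _ /=.
by rewrite mulr_sumr; apply: eq_bigr => i _; rewrite mulr_sumr.
Qed.

End ClassicalStrategy.

Theorem mainTheorem1 (R : realFieldType) (n : nat) (hn : (5 <= n)%N)
  (Omega : finType) (mu : Omega -> R)
  (hint : Omega -> 'I_n -> 'I_n -> bool) (out : Omega -> 'I_n -> bool -> bool) :
  is_distr mu -> p_bound R n <= lose_prob mu hint out.
Proof.
move=> mu_distr.
rewrite p_bound_binomial ?(leq_trans _ hn) // lose_prob_pairs_lost mulrC.
apply: ler_wpM2l; first by rewrite invr_ge0 ler0n.
apply: distr_mean_ge => // w.
apply: le_trans (monochromatic_le_pairs_lost R hint out w); rewrite ler_nat.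
by have := monochromatic_pairs_ge (response out w); rewrite card_prod card_bool.
Qed.
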